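(* Let $F(u):=\tilde{\mathcal E}_0(u)/\zeta(u)-E$, a formal power series in $u$ with operator coefficients, written $F(u)=\sum_{k\ge1}F_ku^k$. Then, as formal series in $z$: (i) $\mathcal D^{(p)}(z)=F(z)=\tilde{\mathcal E}_0(z)/\zeta(z)-E$; (ii) $\mathcal D^{(h)}(z)=\exp\Big(\sum_{k\ge1}F_k\,\big(z^2\tfrac{d}{dz}\big)^k(\log z)\Big)$ (written in the paper as $z^{F(z^2 d/dz)}$); (iii) $\mathcal D^{(\sigma)}(z)=\exp\Big(-\sum_{k\ge1}F_k\,\big(-z^2\tfrac{d}{dz}\big)^k(\log z)\Big)$ (written as $z^{-F(-z^2d/dz)}$). Moreover $\mathcal D^{(h)}(z)=\mathcal D^{(\sigma)}(-z)^{-1}$.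
   Context: $V_0$ is the charge-zero semi-infinite wedge space with basis $v_\lambda=z^{\lambda_1}\wedge z^{\lambda_2-1}\wedge z^{\lambda_3-2}\wedge\cdots$ indexed by all partitions $\lambda$. The energy operator is $E v_\lambda=|\lambda|v_\lambda$. With $\zeta(u)=e^{u/2}-e^{-u/2}$, the Casimir operator is $\tilde{\mathcal E}_0(u)v_\lambda=\sum_{i\ge1}\big(e^{u(\lambda_i-i+\frac12)}-e^{u(-i+\frac12)}\big)v_\lambda$. For $\lambda\vdash n$, $\mathsf{cr}^\lambda$ is the vector of contents (column index minus row index) of the $n$ boxes of $\lambda$. $p_k,h_k,\sigma_k$ denote power sums, complete homogeneous and elementary symmetric polynomials. The operators $\mathcal D^{(p)},\mathcal D^{(h)},\mathcal D^{(\sigma)}$ are diagonal in the basis $v_\lambda$: $\mathcal D^{(p)}(z)v_\lambda=\sum_{k\ge1}\frac{z^k}{k!}p_k(\mathsf{cr}^\lambda)v_\lambda$, $\mathcal D^{(h)}(z)v_\lambda=\sum_{k\ge0}z^kh_k(\mathsf{cr}^\lambda)v_\lambda$, $\mathcal D^{(\sigma)}(z)v_\lambda=\sum_{k\ge0}z^k\sigma_k(\mathsf{cr}^\lambda)v_\lambda$. *)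

From HB Require Import structures.
From mathcomp Require Import all_boot all_order all_algebra.
Set Implicit Arguments. Unset Strict Implicit. Unset Printing Implicit Defensive.
Import Order.TTheory GRing.Theory Num.Theory.
Local Open Scope ring_scope.

Definition is_partition (la : seq nat) : bool :=
  sorted geq la && all (fun x => 0 < x)%N la.

Definition psize (la : seq nat) : nat := sumn la.

Section Defs.
Variable R : numFieldType.

Definition contents (la : seq nat) : seq R :=
  flatten [seq [seq (j%:R - r%:R) | j <- iota 0 (nth 0%N la r)] | r <- iota 0 (size la)].

Definition psym (k : nat) (xs : seq R) : R := \sum_(x <- xs) x ^+ k.

Definition hsym (k : nat) (xs : seq R) : R :=
  \sum_(m : {ffun 'I_(size xs) -> 'I_k.+1} | (\sum_(i < size xs) (m i : nat) == k)%N)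
     \prod_(i < size xs) xs`_i ^+ m i.

Definition esym (k : nat) (xs : seq R) : R :=
  \sum_(A : {set 'I_(size xs)} | #|A| == k) \prod_(i in A) xs`_i.

Definition fps := nat -> R.

Definition fps1 : fps := fun n => (n == 0%N)%:R.
Definition fpsC (c : R) : fps := fun n => (n == 0%N)%:R * c.
Definition fps_add (f g : fps) : fps := fun n => f n + g n.
Definition fps_sub (f g : fps) : fps := fun n => f n - g n.
Definition fps_opp (f : fps) : fps := fun n => - f n.
Definition fps_mul (f g : fps) : fps :=
  fun n => \sum_(i < n.+1) f i * g (n - i)%N.
Definition fps_pow (f : fps) (m : nat) : fps := iter m (fps_mul f) fps1.
Definition fps_negvar (f : fps) : fps := fun n => (-1) ^+ n * f n.
(* f(z)/z, for f with zero constant term *)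
Definition fps_divz (f : fps) : fps := fun n => f n.+1.

Fixpoint inv_list (f : fps) (n : nat) : seq R :=
  match n with
  | 0 => [:: (f 0%N)^-1]
  | n'.+1 => let l := inv_list f n' in
      rcons l (- (f 0%N)^-1 * \sum_(i < n'.+1) f i.+1 * nth 0 l (n' - i)%N)
  end.
Definition fps_inv (f : fps) : fps := fun n => nth 0 (inv_list f n) n.

(* Quotient f/g of two series with zero constant term, g having
   nonzero linear coefficient: (f/z) * (g/z)^{-1}. *)
Definition fps_div (f g : fps) : fps := fps_mul (fps_divz f) (fps_inv (fps_divz g)).

(* exp of a series with zero constant term: sum_m f^m/m!. *)
Definition fps_exp (f : fps) : fps :=
  fun n => \sum_(m < n.+1) fps_pow f m n / (m`!)%:R.

Definition exp_lin (a : R) : fps := fun k => a ^+ k / (k`!)%:R.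

(* An element (c, f) represents c * log z + f(z). *)
Definition logfps := (R * fps)%type.
Definition log_z : logfps := (1, fun _ => 0).
(* (s * z^2 d/dz)(c log z + f) = s*(c z + z^2 f'(z)) *)
Definition ztheta (s : R) (p : logfps) : logfps :=
  (0, fun n => s * (p.1 * (n == 1%N)%:R + (n.-1)%:R * p.2 n.-1)).

(* sum_(k>=1) F_k (s z^2 d/dz)^k (log z); for k >= 1 the result has no
   log z part and lowest order z^k, so coefficient n only involves k <= n. *)
Definition logsum (s : R) (F : fps) : fps :=
  fun n => \sum_(1 <= k < n.+1) F k * (iter k (ztheta s) log_z).2 n.

Definition zeta_ser : fps := fps_sub (exp_lin (1/2)) (exp_lin (-(1/2))).

(* Casimir: sum_{i>=1} (e^{u(la_i - i + 1/2)} - e^{u(-i+1/2)}); the terms with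
   i > size la vanish, rows indexed from 0 here (i = r+1). *)
Definition casimir (la : seq nat) : fps :=
  fun k => \sum_(r < size la)
    (exp_lin ((nth 0%N la r)%:R - r%:R - 1/2) k - exp_lin (- r%:R - 1/2) k).

Definition energy (la : seq nat) : fps := fpsC (psize la)%:R.

Definition Fser (la : seq nat) : fps :=
  fps_sub (fps_div (casimir la) zeta_ser) (energy la).

Definition Dp (la : seq nat) : fps :=
  fun k => if k is 0%N then 0 else psym k (contents la) / (k`!)%:R.
Definition Dh (la : seq nat) : fps := fun k => hsym k (contents la).
Definition Dsig (la : seq nat) : fps := fun k => esym k (contents la).

End Defs.

(* The Casimir eigenvalue telescopes along each row: summing
   e^{(j - r + 1/2) u} - e^{(j - r - 1/2) u} over the boxes (r, j) of row r leaves
   the r-th term of E~_0(u), so E~_0(u) = zeta(u) sum_c e^{c u} over the contents c,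
   and F(u) = sum_(k >= 1) p_k(cr) u^k / k!, the constant term being cancelled by
   E = |lambda|.  Since (z^2 d/dz)^k log z = (k-1)! z^k, the two exponents are
   sum_k p_k z^k / k = - sum_c log (1 - c z) and
   sum_k (-1)^(k-1) p_k z^k / k = sum_c log (1 + c z).
   For L_0 = 0, exp L is the unique g with g_0 = 1 and z g' = z L' g, which is a
   recursion on the coefficients of g; for the generating series of h and e it
   amounts to taking the logarithmic derivative of prod_c 1/(1 - c z) and
   prod_c (1 + c z) (Newton's identities), computed on polynomial truncations.
   Finally prod_c (1 - c z) * prod_c 1/(1 - c z) = 1. *)

From Pilot Require Import Defs.
From HB Require Import structures.
From mathcomp Require Import all_boot all_order all_algebra.
From mathcomp Require Import zify ring.
From Stdlib Require Import FunctionalExtensionality.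
Set Implicit Arguments. Unset Strict Implicit. Unset Printing Implicit Defensive.
Import Order.TTheory GRing.Theory Num.Theory.
Local Open Scope ring_scope.

Section FormalPowerSeries.
Variable R : numFieldType.
Implicit Types (f g h : fps R) (p q : {poly R}).

(* Identities between series are checked degreewise on polynomial truncations. *)
Definition fps_approx N p f := forall i, (i <= N)%N -> p`_i = f i.

Definition fps_trunc N f : {poly R} := \poly_(i < N.+1) f i.

Lemma fps_truncP N f : fps_approx N (fps_trunc N f) f.
Proof. by move=> i iN; rewrite coef_poly ltnS iN. Qed.

Lemma fps_approx1 N : fps_approx N 1 (fps1 R).
Proof. by move=> i _; rewrite coef1. Qed.

Lemma fps_approxM N p q f g :
  fps_approx N p f -> fps_approx N q g -> fps_approx N (p * q) (fps_mul f g).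
Proof.
move=> pf qg i iN; rewrite coefM; apply: eq_bigr => j _.
by rewrite pf ?qg //; have := ltn_ord j; lia.
Qed.

Lemma fps_approxX N p f m : fps_approx N p f -> fps_approx N (p ^+ m) (fps_pow f m).
Proof.
move=> pf; elim: m => [|m IH]; first exact: fps_approx1.
by rewrite exprS /fps_pow iterS; apply: fps_approxM.
Qed.

Lemma fps_mulC f g : fps_mul f g = fps_mul g f.
Proof.
apply: functional_extensionality => n.
have [Pf Pg] := (@fps_truncP n f, @fps_truncP n g).
by rewrite -(fps_approxM Pf Pg (leqnn n)) mulrC (fps_approxM Pg Pf).
Qed.

Lemma fps_mulA f g h : fps_mul f (fps_mul g h) = fps_mul (fps_mul f g) h.
Proof.
apply: functional_extensionality => n.
have [[Pf Pg] Ph] := (@fps_truncP n f, @fps_truncP n g, @fps_truncP n h).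
rewrite -(fps_approxM Pf (fps_approxM Pg Ph) (leqnn n)) mulrA.
by rewrite (fps_approxM (fps_approxM Pf Pg) Ph).
Qed.

Lemma fps_mulr1 f : fps_mul f (fps1 R) = f.
Proof.
apply: functional_extensionality => n.
by rewrite -(fps_approxM (@fps_truncP n f) (@fps_approx1 n) (leqnn n)) mulr1 fps_truncP.
Qed.

Lemma fps_mulBl f g h : fps_mul (fps_sub f g) h = fps_sub (fps_mul f h) (fps_mul g h).
Proof.
apply: functional_extensionality => n.
by rewrite /fps_mul /fps_sub -sumrB; apply: eq_bigr => i _; rewrite mulrBl.
Qed.

Lemma fps_mulS f g n :
  fps_mul f g n.+1 = f 0%N * g n.+1 + \sum_(i < n.+1) f i.+1 * g (n - i)%N.
Proof. by rewrite /fps_mul big_ord_recl subn0. Qed.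

Lemma fps_divzM f g : f 0%N = 0 -> fps_divz (fps_mul f g) = fps_mul (fps_divz f) g.
Proof.
move=> f0; apply: functional_extensionality => n.
by rewrite /fps_divz fps_mulS f0 mul0r add0r.
Qed.

Lemma size_inv_list f n : size (inv_list f n) = n.+1.
Proof. by elim: n => [|n IH] //=; rewrite size_rcons IH. Qed.

Lemma nth_inv_list f n i : (i <= n)%N -> nth 0 (inv_list f n) i = fps_inv f i.
Proof.
elim: n => [|n IH] i_le; first by move: i_le; rewrite leqn0 => /eqP ->.
case: (ltnP i n.+1) => [i_lt|i_ge]; last first.
  by have -> : i = n.+1 by apply/eqP; rewrite eqn_leq i_le i_ge.
by rewrite /= nth_rcons size_inv_list i_lt IH.
Qed.

Lemma fps_invS f n :
  fps_inv f n.+1 = - (f 0%N)^-1 * \sum_(i < n.+1) f i.+1 * fps_inv f (n - i)%N.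
Proof.
rewrite {1}/fps_inv /= nth_rcons size_inv_list ltnn eqxx.
by congr (_ * _); apply: eq_bigr => i _; rewrite nth_inv_list ?leq_subr.
Qed.

Lemma fps_mulV f : f 0%N != 0 -> fps_mul f (fps_inv f) = fps1 R.
Proof.
move=> f0; apply: functional_extensionality => -[|n].
  by rewrite /fps_mul big_ord1 /fps_inv /= mulfV.
by rewrite fps_mulS fps_invS mulrA mulrN mulfV // mulN1r addNr.
Qed.

Lemma fps_inv_unique f g : fps_mul f g = fps1 R -> g = fps_inv f.
Proof.
move=> fg1; have f0 : f 0%N != 0.
  apply/eqP=> f0; have := congr1 (fun s => s 0%N) fg1.
  by rewrite /fps_mul big_ord1 f0 mul0r /fps1 /= => /esym/eqP; rewrite oner_eq0.
by rewrite -[RHS]fps_mulr1 -fg1 fps_mulA (fps_mulC _ f) fps_mulV // fps_mulC fps_mulr1.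
Qed.

End FormalPowerSeries.

Section PolynomialTruncations.
Variable R : numFieldType.
Implicit Types (p q : {poly R}) (c y : R).

Definition euler p : {poly R} := 'X * p^`().

Lemma coef_euler p i : (euler p)`_i = i%:R * p`_i.
Proof. by rewrite /euler coefXM; case: i => [|i]; rewrite ?mul0r // coef_deriv mulr_natl. Qed.

Lemma eulerD p q : euler (p + q) = euler p + euler q.
Proof. by rewrite /euler derivD mulrDr. Qed.

Lemma eulerB p q : euler (p - q) = euler p - euler q.
Proof. by rewrite /euler derivB mulrBr. Qed.

Lemma eulerM p q : euler (p * q) = euler p * q + p * euler q.
Proof. by rewrite /euler derivM mulrDr mulrA mulrCA. Qed.

Lemma eulerZ c p : euler (c *: p) = c *: euler p.
Proof. by rewrite /euler derivZ scalerAr. Qed.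

Lemma eulerC c : euler c%:P = 0.
Proof. by rewrite /euler derivC mulr0. Qed.

Lemma euler0 : euler 0 = 0.
Proof. by rewrite /euler deriv0 mulr0. Qed.

Lemma euler1 : euler 1 = 0.
Proof. by rewrite -polyC1 eulerC. Qed.

Lemma eulerCX c : euler (c%:P * 'X) = c%:P * 'X.
Proof. by rewrite eulerM eulerC mul0r add0r /euler derivX mulr1. Qed.

Lemma euler_sum (I : Type) (s : seq I) (F : I -> {poly R}) :
  euler (\sum_(x <- s) F x) = \sum_(x <- s) euler (F x).
Proof. exact: (big_morph _ eulerD euler0). Qed.

Lemma euler_exp p m : euler (p ^+ m.+1) = (p ^+ m * euler p) *+ m.+1.
Proof. by rewrite /euler deriv_exp /= mulrnAr; congr (_ *+ _); rewrite [RHS]mulrC mulrA. Qed.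

Definition eq_upto N p q := forall i, (i <= N)%N -> p`_i = q`_i.

Lemma eq_upto_sym N p q : eq_upto N p q -> eq_upto N q p.
Proof. by move=> pq i iN; rewrite pq. Qed.

Lemma eq_upto_trans N p q r : eq_upto N p q -> eq_upto N q r -> eq_upto N p r.
Proof. by move=> pq qr i iN; rewrite pq ?qr. Qed.

Lemma eq_uptoD N p q p' q' : eq_upto N p p' -> eq_upto N q q' -> eq_upto N (p + q) (p' + q').
Proof. by move=> pp qq i iN; rewrite !coefD pp ?qq. Qed.

Lemma eq_uptoM N p q p' q' : eq_upto N p p' -> eq_upto N q q' -> eq_upto N (p * q) (p' * q').
Proof.
move=> pp qq i iN; rewrite !coefM; apply: eq_bigr => j _.
by rewrite pp ?qq //; have := ltn_ord j; lia.
Qed.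

Lemma eq_upto_prod N (I : Type) (s : seq I) (F G : I -> {poly R}) :
  (forall x, eq_upto N (F x) (G x)) -> eq_upto N (\prod_(x <- s) F x) (\prod_(x <- s) G x).
Proof. by move=> FG; apply: (big_ind2 (eq_upto N)) => // *; apply: eq_uptoM. Qed.

Lemma eq_upto_euler N p q : eq_upto N p q -> eq_upto N (euler p) (euler q).
Proof. by move=> pq i iN; rewrite !coef_euler pq. Qed.

Lemma euler_prod_upto N (I : Type) (s : seq I) (F U : I -> {poly R}) :
  (forall x, eq_upto N (euler (F x)) (F x * U x)) ->
  eq_upto N (euler (\prod_(x <- s) F x)) ((\prod_(x <- s) F x) * \sum_(x <- s) U x).
Proof.
move=> FU; elim: s => [|x s IH]; first by rewrite !big_nil euler1 mulr0.
rewrite !big_cons eulerM.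
have -> : F x * \prod_(y <- s) F y * (U x + \sum_(y <- s) U y) =
    F x * U x * \prod_(y <- s) F y + F x * ((\prod_(y <- s) F y) * \sum_(y <- s) U y).
  by rewrite mulrDr -!mulrA; congr (_ + _); rewrite (mulrC (U x)).
by apply: eq_uptoD; apply: eq_uptoM.
Qed.

Lemma mulX_drop_poly1 p : p`_0 = 0 -> drop_poly 1 p * 'X = p.
Proof.
move=> p0; rewrite -[RHS](poly_take_drop 1) expr1 [take_poly 1 p](_ : _ = 0) ?add0r //.
by apply/polyP => -[|i]; rewrite coef_take_poly coef0 //= ltnS ltn0.
Qed.

Lemma coef_expr_lt p m i : p`_0 = 0 -> (i < m)%N -> (p ^+ m)`_i = 0.
Proof. by move=> /mulX_drop_poly1 <- im; rewrite exprMn coefMXn im. Qed.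

Lemma coef_euler_mul_expr p n : p`_0 = 0 -> (euler p * p ^+ n)`_n = 0.
Proof.
move=> /mulX_drop_poly1 pE; rewrite -{2}pE exprMn mulrA coefMXn ltnn subnn coef0M.
by rewrite coef_euler mulr0n !mul0r.
Qed.

Definition exp_trunc N p : {poly R} := \sum_(m < N) ((m`!)%:R^-1 : R) *: p ^+ m.

Lemma euler_exp_trunc N p : euler (exp_trunc N.+1 p) = euler p * exp_trunc N p.
Proof.
rewrite /exp_trunc euler_sum big_ord_recl expr0 eulerZ euler1 scaler0 add0r mulr_sumr.
apply: eq_bigr => m _; rewrite lift0 eulerZ euler_exp -scaler_nat scalerA -scalerAr mulrC.
rewrite (mulrC (euler p)); congr (_ *: _).
by rewrite factS natrM invfM mulrA mulfV ?mul1r // pnatr_eq0.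
Qed.

Definition geom_trunc N y : {poly R} := \poly_(j < N.+1) y ^+ j.

Lemma coef_geom_trunc N y i : (geom_trunc N y)`_i = if (i <= N)%N then y ^+ i else 0.
Proof. by rewrite coef_poly ltnS. Qed.

Lemma geom_trunc_upto j N y : (j <= N)%N -> eq_upto j (geom_trunc j y) (geom_trunc N y).
Proof. by move=> jN i ij; rewrite !coef_geom_trunc ij (leq_trans ij jN). Qed.

Lemma mul_geom_trunc N y : eq_upto N ((1 - y%:P * 'X) * geom_trunc N y) 1.
Proof.
move=> i iN; rewrite mulrBl mul1r coefB -mulrA coefCM coefXM coef1 coef_geom_trunc iN.
case: i iN => [|i] iN; first by rewrite mulr0 subr0.
by rewrite /= coef_geom_trunc (ltnW iN) exprS subrr.
Qed.

Lemma euler_geom_trunc N y :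
  eq_upto N (euler (geom_trunc N y)) (geom_trunc N y * (y%:P * 'X * geom_trunc N y)).
Proof.
set G := geom_trunc N y; set A := 1 - y%:P * 'X.
have AG : eq_upto N (A * G) 1 := @mul_geom_trunc N y.
have A_euler : eq_upto N (A * euler G) (y%:P * 'X * G).
  have -> : A * euler G = euler (A * G) + y%:P * 'X * G.
    by rewrite eulerM /A eulerB euler1 eulerCX sub0r mulNr [RHS]addrC addNKr.
  rewrite -[X in eq_upto _ _ X]add0r; apply: eq_uptoD => //.
  by rewrite -euler1; apply: eq_upto_euler.
have : eq_upto N (euler G) ((G * A) * euler G).
  rewrite -[X in eq_upto _ X _]mul1r; apply: eq_uptoM => //.
  by apply: eq_upto_sym; rewrite mulrC.
by move/eq_upto_trans; apply; rewrite -mulrA; apply: eq_uptoM.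
Qed.

Lemma euler_linear_factor N c : eq_upto N (euler (c%:P * 'X + 1))
  ((c%:P * 'X + 1) * (c%:P * 'X * geom_trunc N (- c))).
Proof.
rewrite eulerD euler1 addr0 eulerCX mulrCA -[X in eq_upto _ X _]mulr1.
apply: eq_uptoM => //; apply: eq_upto_sym.
rewrite -[_ + 1](_ : 1 - (- c)%:P * 'X = _); first exact: mul_geom_trunc.
by rewrite polyCN mulNr opprK addrC.
Qed.

Lemma coef_CX_geom_trunc N c y i : (i <= N.+1)%N ->
  (c%:P * 'X * geom_trunc N y)`_i = if i is j.+1 then c * y ^+ j else 0.
Proof. by rewrite -mulrA coefCM coefXM; case: i => [|i] iN; rewrite ?mulr0 // coef_geom_trunc -ltnS iN. Qed.

Lemma coef_prod_linear n (c : 'I_n -> R) k :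
  (\prod_(i < n) ((c i)%:P * 'X + 1))`_k = \sum_(A : {set 'I_n} | #|A| == k) \prod_(i in A) c i.
Proof.
rewrite bigA_distr coef_sum (bigID (fun A : {set 'I_n} => #|A| == k)) /= addrC big1 ?add0r.
  apply: eq_bigr => A /eqP <-.
  by rewrite big_if /= [X in _ * X]big1 // mulr1 big_split -rmorph_prod prodr_const coefCM coefXn eqxx mulr1.
move=> A /negPf Ak.
by rewrite big_if /= [X in _ * X]big1 // mulr1 big_split -rmorph_prod prodr_const coefCM coefXn eq_sym Ak mulr0.
Qed.

End PolynomialTruncations.

Section SeriesEuler.
Variable R : numFieldType.
Implicit Types (f g h a : fps R) (p q : {poly R}).

Definition fps_euler f : fps R := fun n => n%:R * f n.

Lemma fps_approx_euler N p f : fps_approx N p f -> fps_approx N (euler p) (fps_euler f).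
Proof. by move=> pf i iN; rewrite coef_euler pf. Qed.

Lemma fps_eulerN f : fps_euler (fps_opp f) = fps_opp (fps_euler f).
Proof. by apply: functional_extensionality => n; rewrite /fps_euler /fps_opp mulrN. Qed.

Lemma fps_euler_coef_approx N p q f a : fps_approx N p f -> fps_approx N q a ->
  eq_upto N (euler p) (p * q) -> fps_euler f N = fps_mul a f N.
Proof.
move=> pf qa pq.
by rewrite -(fps_approx_euler pf) // pq // mulrC (fps_approxM qa pf).
Qed.

(* As n%:R is invertible, n g_n = sum_(i <= n) a_i g_(n-i) with a_0 = 0 is a recursion for g. *)
Lemma fps_euler_unique a g h : a 0%N = 0 -> g 0%N = h 0%N ->
  fps_euler g = fps_mul a g -> fps_euler h = fps_mul a h -> g = h.
Proof.
move=> a0 gh0 eg eh; apply: functional_extensionality => n.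
elim/ltn_ind: n => -[|n] IH //.
have := congr1 (fun s => s n.+1) eg; have := congr1 (fun s => s n.+1) eh.
rewrite /fps_euler !fps_mulS a0 !mul0r !add0r => {}eh {}eg.
have n1_neq0 : n.+1%:R != 0 :> R by rewrite pnatr_eq0.
apply: (mulfI n1_neq0); rewrite eg eh; apply: eq_bigr => i _.
by rewrite IH // ltnS leq_subr.
Qed.

Lemma fps_exp0 f : fps_exp f 0%N = 1.
Proof. by rewrite /fps_exp big_ord1 /fps_pow /= /fps1 /= fact0 divr1. Qed.

Lemma fps_approx_exp_trunc n p f : p`_0 = 0 -> fps_approx n p f ->
  fps_approx n (exp_trunc n.+1 p) (fps_exp f).
Proof.
move=> p0 pf j jn; rewrite /exp_trunc coef_sum /fps_exp.
rewrite (big_ord_widen n.+1 (fun m => fps_pow f m j / (m`!)%:R)) // [RHS]big_mkcond /=.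
apply: eq_bigr => m _; rewrite coefZ -(fps_approxX m pf jn) mulrC.
by case: (ltnP m j.+1) => // jm; rewrite coef_expr_lt ?mul0r.
Qed.

Lemma fps_euler_exp f : f 0%N = 0 -> fps_euler (fps_exp f) = fps_mul (fps_euler f) (fps_exp f).
Proof.
move=> f0; apply: functional_extensionality => n.
pose p := fps_trunc n f.
have pf : fps_approx n p f := @fps_truncP _ n f.
have p0 : p`_0 = 0 by rewrite pf.
have pE := fps_approx_exp_trunc p0 pf.
rewrite /fps_euler -pE // -coef_euler euler_exp_trunc.
rewrite -(fps_approxM (fps_approx_euler pf) pE (leqnn n)) /exp_trunc big_ord_recr /=.
by rewrite mulrDr coefD -scalerAr coefZ coef_euler_mul_expr // mulr0 addr0.
Qed.

Lemma fps_exp_unique f g : f 0%N = 0 -> g 0%N = 1 ->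
  fps_euler g = fps_mul (fps_euler f) g -> g = fps_exp f.
Proof.
move=> f0 g0 eg; apply: (fps_euler_unique _ _ eg (fps_euler_exp f0)).
- by rewrite /fps_euler f0 mulr0.
- by rewrite fps_exp0.
Qed.

Lemma iter_ztheta_log_z (s : R) k :
  iter k.+1 (ztheta s) (log_z R) = (0, fun n => s ^+ k.+1 * (k`!)%:R * (n == k.+1)%:R).
Proof.
elim: k => [|k IH].
  congr pair; apply: functional_extensionality => n /=.
  by rewrite mulr0 addr0 mul1r expr1 fact0 mulr1.
rewrite iterS IH /=; congr pair; apply: functional_extensionality => -[|n] /=.
  by ring.
change (n.+1 == k.+2) with (n == k.+1).
case: (eqVneq n k.+1) => [->|_]; last by rewrite mulr0n !(mulr0, mul0r, addr0).
by rewrite factS natrM !exprS; ring.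
Qed.

Lemma logsum0 (s : R) F : logsum s F 0 = 0.
Proof. by rewrite /logsum big_geq. Qed.

Lemma logsumS (s : R) F m : logsum s F m.+1 = F m.+1 * (s ^+ m.+1 * (m`!)%:R).
Proof.
rewrite /logsum big_nat_recr // iter_ztheta_log_z /= eqxx mulr1.
rewrite big_nat_cond big1 ?add0r // => k /andP[/andP[k_pos km] _].
case: k k_pos km => // k _ km.
by rewrite iter_ztheta_log_z /= (gtn_eqF km) mulr0n !mulr0.
Qed.

End SeriesEuler.

Section SymmetricSeries.
Variable R : numFieldType.
Variable xs : seq R.

Definition hsym_ser : fps R := fun n => hsym n xs.
Definition esym_ser : fps R := fun n => Defs.esym n xs.
(* The series sum_(x <- xs) x z / (1 - x z). *)
Definition psym_ser : fps R := fun n => if n is 0 then 0 else psym n xs.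

Lemma fps_approx_esym N :
  fps_approx N (\prod_(i < size xs) ((xs`_i)%:P * 'X + 1)) esym_ser.
Proof. by move=> k _; rewrite coef_prod_linear. Qed.

Lemma fps_approx_hsym N :
  fps_approx N (\prod_(i < size xs) geom_trunc N xs`_i) hsym_ser.
Proof.
move=> k kN; rewrite -(eq_upto_prod _ (fun i : 'I_(size xs) => geom_trunc_upto xs`_i kN)) //.
rewrite /hsym_ser /hsym /geom_trunc; under eq_bigr => i _ do rewrite poly_def.
rewrite bigA_distr_bigA coef_sum [RHS]big_mkcond /=; apply: eq_bigr => m _.
under eq_bigr => i _ do rewrite -mul_polyC.
rewrite big_split /= -rmorph_prod prodrXr coefCM coefXn eq_sym.
by case: ifP; rewrite ?mulr1 ?mulr0.
Qed.

Lemma fps_approx_psym N :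
  fps_approx N (\sum_(i < size xs) (xs`_i)%:P * 'X * geom_trunc N xs`_i) psym_ser.
Proof.
move=> k kN; rewrite coef_sum /psym_ser; case: k kN => [|k] kN.
  by apply: big1 => i _; rewrite coef_CX_geom_trunc.
rewrite /psym (big_nth 0) big_mkord; apply: eq_bigr => i _.
by rewrite coef_CX_geom_trunc ?(leqW kN) // -exprS.
Qed.

Lemma fps_approx_opp_negvar_psym N :
  fps_approx N (\sum_(i < size xs) (xs`_i)%:P * 'X * geom_trunc N (- xs`_i))
    (fps_opp (fps_negvar psym_ser)).
Proof.
move=> k kN; rewrite coef_sum /fps_opp /fps_negvar /psym_ser; case: k kN => [|k] kN.
  by rewrite mulr0 oppr0; apply: big1 => i _; rewrite coef_CX_geom_trunc.
rewrite /psym (big_nth 0) big_mkord mulr_sumr -sumrN; apply: eq_bigr => i _.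
by rewrite coef_CX_geom_trunc ?(leqW kN) // [(- xs`_i) ^+ k]exprNn !exprS mulN1r mulNr opprK mulrCA.
Qed.

Lemma hsym_ser0 : hsym_ser 0 = 1.
Proof.
rewrite -(@fps_approx_hsym 0 0 (leqnn 0)) coef0_prod big1 // => i _.
by rewrite coef_geom_trunc expr0.
Qed.

Lemma esym_ser0 : esym_ser 0 = 1.
Proof.
rewrite -(@fps_approx_esym 0 0 (leqnn 0)) coef0_prod big1 // => i _.
by rewrite coefD coefCM coefX coef1 mulr0 add0r.
Qed.

Lemma fps_euler_hsym : fps_euler hsym_ser = fps_mul psym_ser hsym_ser.
Proof.
apply: functional_extensionality => N.
apply: (fps_euler_coef_approx (@fps_approx_hsym N) (@fps_approx_psym N)).
by apply: euler_prod_upto => i; apply: euler_geom_trunc.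
Qed.

Lemma fps_euler_esym :
  fps_euler esym_ser = fps_mul (fps_opp (fps_negvar psym_ser)) esym_ser.
Proof.
apply: functional_extensionality => N.
apply: (fps_euler_coef_approx (@fps_approx_esym N) (@fps_approx_opp_negvar_psym N)).
by apply: euler_prod_upto => i; apply: euler_linear_factor.
Qed.

Lemma hsym_ser_inv : hsym_ser = fps_inv (fps_negvar esym_ser).
Proof.
apply: fps_inv_unique; apply: functional_extensionality => N.
have negE : fps_approx N (\prod_(i < size xs) ((- xs`_i)%:P * 'X + 1)) (fps_negvar esym_ser).
  move=> k _; rewrite coef_prod_linear /fps_negvar /esym_ser /Defs.esym mulr_sumr.
  by apply: eq_bigr => A /eqP Ak; rewrite prodrN Ak.
rewrite -(fps_approxM negE (@fps_approx_hsym N) (leqnn N)) -big_split /=.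
have := @eq_upto_prod R N _ (index_enum 'I_(size xs))
  (fun i => ((- xs`_i)%:P * 'X + 1) * geom_trunc N xs`_i) (fun=> 1).
move=> -> //; first by rewrite big1_eq coef1.
by move=> i; rewrite polyCN mulNr addrC; apply: mul_geom_trunc.
Qed.

End SymmetricSeries.

Section ExponentialSeries.
Variable R : numFieldType.
Implicit Types (a b c : R).

Lemma natr_fact_neq0 k : (k`!)%:R != 0 :> R.
Proof. by rewrite pnatr_eq0 -lt0n fact_gt0. Qed.

Lemma exp_linD a b : fps_mul (exp_lin a) (exp_lin b) = exp_lin (a + b).
Proof.
apply: functional_extensionality => n.
rewrite /fps_mul /exp_lin addrC exprDn mulr_suml; apply: eq_bigr => i _.
have binE : 'C(n, i)%:R = (n`!)%:R / ((i`!)%:R * ((n - i)`!)%:R) :> R.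
  have i_le : (i <= n)%N by rewrite -ltnS.
  by rewrite -(bin_fact i_le) !natrM mulfK // mulf_eq0 negb_or !natr_fact_neq0.
rewrite -(mulr_natr (b ^+ (n - i) * a ^+ i)) binE.
by field; rewrite !natr_fact_neq0.
Qed.

Lemma zeta_ser_mul_exp_lin c :
  fps_mul (zeta_ser R) (exp_lin c) = fps_sub (exp_lin (c + 1/2)) (exp_lin (c - 1/2)).
Proof. by rewrite /zeta_ser fps_mulBl !exp_linD (addrC (1/2)) (addrC (- _)). Qed.

Lemma zeta_ser0 : zeta_ser R 0%N = 0.
Proof. by rewrite /zeta_ser /fps_sub /exp_lin !expr0 subrr. Qed.

Lemma zeta_ser1 : zeta_ser R 1%N = 1.
Proof.
rewrite /zeta_ser /fps_sub /exp_lin !expr1 (_ : 1`! = 1%N) // !divr1 opprK.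
by field.
Qed.

End ExponentialSeries.

Section Contents.
Variable R : numFieldType.
Variable la : seq nat.

Definition exp_contents : fps R := fun n => \sum_(c <- contents R la) exp_lin c n.

Lemma casimir_zeta : casimir R la = fps_mul (zeta_ser R) exp_contents.
Proof.
apply: functional_extensionality => n.
have -> : fps_mul (zeta_ser R) exp_contents n =
    \sum_(c <- contents R la) fps_mul (zeta_ser R) (exp_lin c) n.
  rewrite /fps_mul /exp_contents (exchange_big_dep xpredT) //=.
  by apply: eq_bigr => i _; rewrite mulr_sumr.
have sum_iota0 (F : nat -> R) m : \sum_(j <- iota 0 m) F j = \sum_(0 <= j < m) F j.
  by rewrite /index_iota subn0.
rewrite /casimir /contents big_flatten big_map sum_iota0 big_mkord; apply: eq_bigr => r _.
rewrite big_map sum_iota0.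
under eq_bigr => j _ do rewrite zeta_ser_mul_exp_lin /fps_sub.
pose u j := exp_lin (j%:R - r%:R - 1/2 : R) n.
rewrite (eq_bigr (fun j => u j.+1 - u j)); last first.
  by move=> j _; rewrite /u mulrS; congr (exp_lin _ _ - exp_lin _ _); field.
by rewrite telescope_sumr // /u sub0r.
Qed.

Lemma fps_div_casimir : fps_div (casimir R la) (zeta_ser R) = exp_contents.
Proof.
rewrite /fps_div casimir_zeta fps_divzM ?zeta_ser0 // (fps_mulC _ exp_contents) -fps_mulA.
by rewrite fps_mulV ?fps_mulr1 // /fps_divz zeta_ser1 oner_neq0.
Qed.

Lemma size_contents : size (contents R la) = psize la.
Proof.
rewrite /contents /psize size_flatten /shape -map_comp -[in RHS](mkseq_nth 0%N la).
by congr sumn; apply: eq_map => r /=; rewrite size_map size_iota.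
Qed.

Lemma Fser_Dp : Fser R la = Dp R la.
Proof.
apply: functional_extensionality => -[|k]; rewrite /Fser fps_div_casimir /fps_sub /energy /fpsC.
  rewrite mul1r /exp_contents /Dp.
  under eq_bigr => c _ do rewrite /exp_lin expr0 fact0 divr1.
  by rewrite big_const_seq count_predT iter_addr_0 size_contents subrr.
by rewrite mul0r subr0 /exp_contents /Dp /psym mulr_suml.
Qed.

Lemma fps_euler_logsum_Dp (s : R) :
  fps_euler (logsum s (Dp R la)) = fun n => s ^+ n * psym_ser (contents R la) n.
Proof.
apply: functional_extensionality => -[|m]; first by rewrite /fps_euler mul0r /= mulr0.
rewrite /fps_euler logsumS /Dp /= factS natrM.
have m1_neq0 : m.+1%:R != 0 :> R by rewrite pnatr_eq0.
by field; rewrite natr_fact_neq0 -[1 + _]mulrS m1_neq0.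
Qed.

Lemma fps_euler_logsum_Dp_pos :
  fps_euler (logsum 1 (Dp R la)) = psym_ser (contents R la).
Proof.
rewrite fps_euler_logsum_Dp; apply: functional_extensionality => n.
by rewrite expr1n mul1r.
Qed.

Lemma fps_euler_logsum_Dp_neg :
  fps_euler (fps_opp (logsum (-1) (Dp R la))) = fps_opp (fps_negvar (psym_ser (contents R la))).
Proof. by rewrite fps_eulerN fps_euler_logsum_Dp. Qed.

End Contents.

Theorem proposition5p1 (R : numFieldType) (la : seq nat) :
  is_partition la ->
  [/\ Dp R la = Fser R la,
      Dh R la = fps_exp (logsum 1 (Fser R la)),
      Dsig R la = fps_exp (fps_opp (logsum (-1) (Fser R la)))
    & Dh R la = fps_inv (fps_negvar (Dsig R la))].
Proof.
move=> _; rewrite Fser_Dp; split => //.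
- apply: fps_exp_unique; [exact: logsum0 | exact: hsym_ser0 |].
  by rewrite fps_euler_logsum_Dp_pos; apply: fps_euler_hsym.
- apply: fps_exp_unique; [by rewrite /fps_opp logsum0 oppr0 | exact: esym_ser0 |].
  by rewrite fps_euler_logsum_Dp_neg; apply: fps_euler_esym.
- exact: hsym_ser_inv.
Qed.
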